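(* Let $\sigma$ be a confined position on the complete bipartite graph $K_{a,b}$ with sides $L$ ($|L|=a$) and $R$ ($|R|=b$). If $v,w\in L$ satisfy $\sigma(v)\le\sigma(w)$, then for all $t\ge 0$, $u_t(\sigma,v)\le u_t(\sigma,w)\le u_t(\sigma,v)+1$.
   Context: Parallel chip-firing game: on a graph $G$, a position $\sigma$ assigns a nonnegative integer $\sigma(v)$ to each vertex. Writing $\Phi_\sigma(v)$ for the number of neighbors $w$ of $v$ with $\sigma(w)\ge\deg(w)$, the step operator is $U\sigma(v)=\sigma(v)+\Phi_\sigma(v)$ if $\sigma(v)\le \deg(v)-1$ and $U\sigma(v)=\sigma(v)+\Phi_\sigma(v)-\deg(v)$ otherwise. A position is confined if every vertex satisfies $\Phi_\sigma(v)\le\sigma(v)\le\Phi_\sigma(v)+\deg(v)-1$. In $K_{a,b}$, every vertex of $L$ is adjacent exactly to all vertices of $R$ (degree $b$) and vice versa (degree $a$). $u_t(\sigma,v)=|\{s: 0\le s<t,\ U^s\sigma(v)\ge\deg(v)\}|$. *)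

From mathcomp Require Import all_boot.
Set Implicit Arguments. Unset Strict Implicit. Unset Printing Implicit Defensive.

(* Vertices of K_{a,b}: left side L = 'I_a (inl), right side R = 'I_b (inr). *)
Definition vtx (a b : nat) : finType := ('I_a + 'I_b)%type.

Definition adj a b (v w : vtx a b) : bool :=
  match v, w with
  | inl _, inr _ => true
  | inr _, inl _ => true
  | _, _ => false
  end.

Definition deg a b (v : vtx a b) : nat :=
  match v with inl _ => b | inr _ => a end.

Definition position a b := vtx a b -> nat.

Definition Phi a b (s : position a b) (v : vtx a b) : nat :=
  #|[pred w : vtx a b | adj v w && (deg w <= s w)]|.

(* Step operator U. (sigma(v) <= deg(v) - 1 is written sigma(v) < deg(v).) *)
Definition step a b (s : position a b) : position a b :=
  fun v => if s v < deg v then s v + Phi s v else s v + Phi s v - deg v.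

(* Confined: Phi(v) <= sigma(v) <= Phi(v) + deg(v) - 1 for all v
   (upper bound written without truncated subtraction). *)
Definition confined a b (s : position a b) : Prop :=
  forall v, Phi s v <= s v /\ s v < Phi s v + deg v.

Definition u a b (t : nat) (s : position a b) (v : vtx a b) : nat :=
  count (fun k => deg v <= iter k (@step a b) s v) (iota 0 t).

(* The chips held by a vertex plus [deg] times the number of times it fired
   (its "load") grows at each step by exactly [Phi] of the current position.
   Two vertices of L have the same neighbourhood, hence the same [Phi] at every
   time, so their loads keep the constant difference [s w - s v], which
   confinement forces below [b]. A load difference in [0, b) lets the firing
   counts differ by at most one, and an induction on [t] keeps them ordered. *)
From mathcomp Require Import all_boot.
From mathcomp Require Import zify.

Set Implicit Arguments.
Unset Strict Implicit.
Unset Printing Implicit Defensive.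

Section ChipFiring.

Variables a b : nat.
Implicit Types (s : position a b) (z : vtx a b).

Lemma Phi_inl s (v w : 'I_a) : Phi s (inl v) = Phi s (inl w).
Proof. exact: eq_card. Qed.

Lemma u0 s z : u 0 s z = 0.
Proof. by []. Qed.

Lemma uS t s z : u t.+1 s z = u t s z + (deg z <= iter t (@step a b) s z).
Proof. by rewrite /u -addn1 iotaD count_cat /= addn0. Qed.

Definition load t s z := iter t (@step a b) s z + deg z * u t s z.

Lemma load0 s z : load 0 s z = s z.
Proof. by rewrite /load muln0 addn0. Qed.

Lemma loadS t s z : load t.+1 s z = load t s z + Phi (iter t (@step a b) s) z.
Proof.
rewrite /load uS iterS; set x := iter t _ s; rewrite /step.
case: leqP => fire /=; last by rewrite addn0 addnAC.
by rewrite addn1 mulnS; lia.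
Qed.

Lemma load_inl t s (v w : 'I_a) :
  load t s (inl w) + s (inl v) = load t s (inl v) + s (inl w).
Proof.
elim: t => [|t IHt]; first by rewrite !load0 addnC.
by rewrite !loadS (Phi_inl _ w v) addnAC IHt addnAC.
Qed.

Lemma confined_inl_gap s (v w : 'I_a) :
  confined s -> s (inl w) < s (inl v) + b.
Proof.
move=> conf; have [Phi_le_v _] := conf (inl v); have [_ w_lt] := conf (inl w).
rewrite (Phi_inl _ w v) in w_lt.
by apply: leq_trans w_lt _; rewrite leq_add2r.
Qed.

End ChipFiring.

Lemma fire_count_step (d xv xw uv uw cv cw : nat) :
  cv <= cw < cv + d -> uv <= uw <= uv + 1 ->
  xw + d * uw + cv = xv + d * uv + cw ->
  uv + (d <= xv) <= uw + (d <= xw) <= uv + (d <= xv) + 1.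
Proof.
move=> c_gap u_gap.
have [-> | ->] : uw = uv \/ uw = uv.+1 by lia.
all: rewrite ?mulnS; case: (leqP d xv); case: (leqP d xw) => /=; lia.
Qed.

Theorem lemma3p1 (a b : nat) (s : position a b) (v w : 'I_a) :
  confined s ->
  s (inl v) <= s (inl w) ->
  forall t : nat,
    u t s (inl v) <= u t s (inl w) /\ u t s (inl w) <= u t s (inl v) + 1.
Proof.
move=> conf s_le t; apply/andP.
have gap : s (inl v) <= s (inl w) < s (inl v) + b.
  by rewrite s_le confined_inl_gap.
elim: t => [|t IHt]; first by rewrite !u0.
rewrite !uS.
apply: fire_count_step gap IHt _.
by have := load_inl t s v w; rewrite /load.
Qed.
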